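(* Let $\mathbb{F}_q$ be a finite field, $G_4=UU_4(\mathbb{F}_q)$ the group of $4\times 4$ upper triangular unipotent matrices over $\mathbb{F}_q$, and $N_2=\{A=(a_{ij})\in G_4: a_{23}=0,\ a_{12}a_{34}\ne 0\}$. Define an equivalence relation $R$ on $N_2$ by $yRz$ iff $C_{G_4}(y)=C_{G_4}(z)$. Then the set \[X_{N_2}=\{A=(a_{ij})\in G_4: a_{12}=1,\ a_{13}=x_{13},\ a_{14}=0,\ a_{23}=0,\ a_{24}=x_{24},\ a_{34}=x_{34},\ x_{34}\in\mathbb{F}_q^*,\ x_{13},x_{24}\in\mathbb{F}_q\}\] contains exactly one element of each $R$-equivalence class of $N_2$, and $|X_{N_2}|=q^2(q-1)$.
   Context: $C_{G_4}(y)$ denotes the centralizer of $y$ in $G_4$. *)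

From HB Require Import structures.
From mathcomp Require Import all_boot all_order all_algebra all_fingroup all_field.
Set Implicit Arguments. Unset Strict Implicit. Unset Printing Implicit Defensive.
Import GRing.Theory.
Local Open Scope ring_scope.

Section UU4.
Variable F : finFieldType.

(* 1-based entry access: ent A i j = a_{ij}, for 1 <= i, j <= 4 *)
Definition ent (A : 'M[F]_4) (i j : nat) : F := A (@inord 3 i.-1) (@inord 3 j.-1).

Definition G4 : {set 'M[F]_4} :=
  [set A : 'M[F]_4 | [forall i : 'I_4, forall j : 'I_4,
      ((j < i)%N ==> (A i j == 0)) && ((i == j) ==> (A i j == 1))]].

Definition centG4 (y : 'M[F]_4) : {set 'M[F]_4} :=
  [set g in G4 | g *m y == y *m g].

Definition Rrel (y z : 'M[F]_4) : Prop := centG4 y = centG4 z.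

Definition N2 : {set 'M[F]_4} :=
  [set A in G4 | [&& ent A 2 3 == 0, ent A 1 2 != 0 & ent A 3 4 != 0]].

Definition X_N2 : {set 'M[F]_4} :=
  [set A in G4 | [&& ent A 1 2 == 1, ent A 1 4 == 0, ent A 2 3 == 0
                   & ent A 3 4 != 0]].
End UU4.

From HB Require Import structures.
From mathcomp Require Import all_boot all_order all_algebra all_fingroup all_field.
From mathcomp Require Import ring.
Set Implicit Arguments. Unset Strict Implicit. Unset Printing Implicit Defensive.
Import GRing.Theory.
Local Open Scope ring_scope.

(* An element of G_4 is determined by its six entries above the diagonal, and
   g commutes with y iff three bilinear equations in these entries hold.  When
   y_23 = 0 these equations do not involve y_14 and are homogeneous in
   (y_12, y_13, y_24, y_34), so dividing y by y_12 and erasing y_14 keeps the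
   centralizer; this gives the representative in X_N2.  Two representatives
   with the same centralizer coincide, as three explicit elements of G_4 that
   commute with one of them show. *)

Section UnitriangularMatrices.
Variable R : comPzRingType.

Definition uu4 (a12 a13 a14 a23 a24 a34 : R) : 'M[R]_4 :=
  \matrix_(i, j) match i : nat, j : nat with
  | 0, 0 | 1, 1 | 2, 2 | 3, 3 => 1
  | 0, 1 => a12 | 0, 2 => a13 | 0, 3 => a14
  | 1, 2 => a23 | 1, 3 => a24 | 2, 3 => a34
  | _, _ => 0 end.

Lemma mulmx_uu4 a12 a13 a14 a23 a24 a34 b12 b13 b14 b23 b24 b34 :
  uu4 a12 a13 a14 a23 a24 a34 *m uu4 b12 b13 b14 b23 b24 b34 =
  uu4 (a12 + b12) (a13 + a12 * b23 + b13)
      (a14 + a12 * b24 + a13 * b34 + b14)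
      (a23 + b23) (a24 + a23 * b34 + b24) (a34 + b34).
Proof.
apply/matrixP => i j; rewrite !mxE !big_ord_recr big_ord0 /= !mxE.
by case: i => [[|[|[|[|i]]]] Hi] //; case: j => [[|[|[|[|j]]]] Hj] //=; ring.
Qed.

Lemma uu4_inj a12 a13 a14 a23 a24 a34 b12 b13 b14 b23 b24 b34 :
  uu4 a12 a13 a14 a23 a24 a34 = uu4 b12 b13 b14 b23 b24 b34 ->
  [/\ a12 = b12, a13 = b13, a14 = b14 & [/\ a23 = b23, a24 = b24 & a34 = b34]].
Proof.
move/matrixP=> E.
have e (i j : 'I_4) := E i j; rewrite /uu4 in e.
move: (e 0 1) (e 0 2) (e 0 3) (e 1 2) (e 1 3) (e 2 3); rewrite !mxE /=.
by do 6![move=> ->].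
Qed.

Lemma eq_of_sub_eqM (x y u v k : R) : u = v -> x - y = (u - v) * k -> x = y.
Proof. by move=> -> E; apply/eqP; rewrite -subr_eq0 E subrr mul0r. Qed.

Lemma commute_uu4 g12 g13 g14 g23 g24 g34 y12 y13 y14 y23 y24 y34
    (g := uu4 g12 g13 g14 g23 g24 g34) (y := uu4 y12 y13 y14 y23 y24 y34) :
  g *m y = y *m g <->
  [/\ g12 * y23 = y12 * g23, g23 * y34 = y23 * g34
    & g12 * y24 + g13 * y34 = y12 * g24 + y13 * g34].
Proof.
rewrite /g /y !mulmx_uu4; split.
  case/uu4_inj=> _ E13 E14 [_ E24 _]; split.
  - by apply: (eq_of_sub_eqM (k := 1) E13); ring.
  - by apply: (eq_of_sub_eqM (k := 1) E24); ring.
  - by apply: (eq_of_sub_eqM (k := 1) E14); ring.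
case=> E23 E34 E24; congr uu4; first [ring
  | by apply: (eq_of_sub_eqM (k := 1) E23); ring
  | by apply: (eq_of_sub_eqM (k := 1) E34); ring
  | by apply: (eq_of_sub_eqM (k := 1) E24); ring].
Qed.

End UnitriangularMatrices.

Section CentralizersInG4.
Variable F : finFieldType.
Implicit Types (A g : 'M[F]_4).

Lemma ent_uu4 (a12 a13 a14 a23 a24 a34 : F) (A := uu4 a12 a13 a14 a23 a24 a34) :
  [/\ ent A 1 2 = a12, ent A 1 3 = a13, ent A 1 4 = a14
    & [/\ ent A 2 3 = a23, ent A 2 4 = a24 & ent A 3 4 = a34]].
Proof. by rewrite /A /ent !mxE !inordK. Qed.

Lemma uu4_G4 (a12 a13 a14 a23 a24 a34 : F) : uu4 a12 a13 a14 a23 a24 a34 \in G4 F.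
Proof.
rewrite inE; apply/forallP => i; apply/forallP => j; rewrite mxE.
by case: i => [[|[|[|[|i]]]] Hi] //; case: j => [[|[|[|[|j]]]] Hj] //=;
  rewrite eqxx.
Qed.

Lemma G4_uu4 A : A \in G4 F ->
  A = uu4 (ent A 1 2) (ent A 1 3) (ent A 1 4) (ent A 2 3) (ent A 2 4) (ent A 3 4).
Proof.
rewrite inE => /forallP G4A; apply/matrixP => i j.
have := forallP (G4A i) j; rewrite mxE /ent.
case: i => [[|[|[|[|i]]]] Hi] //; case: j => [[|[|[|[|j]]]] Hj] //=.
all: first [ by move/eqP | by rewrite andbT => /eqP
  | by move=> _; congr (A _ _); apply/val_inj; rewrite /= inordK ].
Qed.

Lemma mem_centG4_uu4 g (y12 y13 y14 y23 y24 y34 : F) :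
  (g \in centG4 (uu4 y12 y13 y14 y23 y24 y34)) =
  (g \in G4 F) && [&& ent g 1 2 * y23 == y12 * ent g 2 3,
     ent g 2 3 * y34 == y23 * ent g 3 4 &
     ent g 1 2 * y24 + ent g 1 3 * y34 == y12 * ent g 2 4 + y13 * ent g 3 4].
Proof.
rewrite inE; case G4g: (g \in G4 F) => //=.
rewrite {1 2}(G4_uu4 G4g).
apply/eqP/and3P => [/commute_uu4[-> -> ->]|[/eqP ? /eqP ? /eqP ?]].
  by rewrite !eqxx.
exact/commute_uu4.
Qed.

Lemma centG4_normalize (y12 y13 y14 y24 y34 : F) : y12 != 0 -> y34 != 0 ->
  centG4 (uu4 y12 y13 y14 0 y24 y34) =
  centG4 (uu4 1 (y13 / y12) 0 0 (y24 / y12) (y34 / y12)).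
Proof.
move=> nz12 nz34; apply/setP => g; rewrite !mem_centG4_uu4.
case: (g \in G4 F) => //=.
have nz34' : y34 / y12 != 0 by rewrite mulf_neq0 ?invr_neq0.
rewrite !(mulr0, mul0r, mul1r) ![0 == _]eq_sym !mulf_eq0.
rewrite (negbTE nz12) (negbTE nz34) invr_eq0 (negbTE nz12) !orbF.
congr (_ && (_ && _)); apply/eqP/eqP => E.
  by apply: (eq_of_sub_eqM (k := y12^-1) E); field.
by apply: (eq_of_sub_eqM (k := y12) E); field.
Qed.

Lemma centG4_normal_inj (u v w u' v' w' : F) :
  centG4 (uu4 1 u 0 0 v w) = centG4 (uu4 1 u' 0 0 v' w') ->
  [/\ u = u', v = v' & w = w'].
Proof.
move=> E.
have same g : (g \in centG4 (uu4 1 u 0 0 v w)) =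
              (g \in centG4 (uu4 1 u' 0 0 v' w')) by rewrite E.
have := same (uu4 1 0 0 0 v 0); have := same (uu4 0 1 0 0 w 0).
have := same (uu4 0 0 0 0 (- u) 1).
rewrite !mem_centG4_uu4 !uu4_G4.
have [-> -> _ [-> -> ->]] := ent_uu4 (1 : F) 0 0 0 v 0.
have [-> -> _ [-> -> ->]] := ent_uu4 (0 : F) 1 0 0 w 0.
have [-> -> _ [-> -> ->]] := ent_uu4 (0 : F) 0 0 0 (- u) 1.
rewrite !(mulr0, mul0r, mul1r, mulr1, addr0, add0r, eqxx) addNr eqxx /=.
move=> /esym; rewrite eq_sym addrC subr_eq0 => /eqP Eu.
by move=> /esym/eqP Ew /esym/eqP Ev.
Qed.

Lemma X_N2_image : X_N2 F =
  [set uu4 1 p.1.1 0 0 p.1.2 p.2 | p in setX [set: F * F] [set~ 0]].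
Proof.
apply/setP => x; apply/setIdP/imsetP.
  case=> /G4_uu4 Ex /and4P[/eqP e12 /eqP e14 /eqP e23 nz34].
  exists (ent x 1 3, ent x 2 4, ent x 3 4); first by rewrite !inE.
  by rewrite {1}Ex e12 e14 e23.
case=> -[[u v] w] /setXP[_]; rewrite in_setC1 => nz ->.
have [-> _ -> [-> _ ->]] := ent_uu4 1 u 0 0 v w.
by split; [exact: uu4_G4 | rewrite nz !eqxx].
Qed.

End CentralizersInG4.

Theorem lemma4p7 (F : finFieldType) :
  X_N2 F \subset N2 F /\
  (forall y, y \in N2 F -> exists! x, x \in X_N2 F /\ Rrel y x) /\
  #|X_N2 F| = (#|F| ^ 2 * (#|F| - 1))%N.
Proof.
split.
  apply/subsetP => x /setIdP[G4x /and4P[/eqP e12 _ e23 nz34]].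
  by rewrite inE G4x e12 e23 nz34 oner_neq0.
split.
  move=> y /setIdP[/G4_uu4 Ey /and3P[/eqP y23 nz12 nz34]].
  rewrite Ey y23; move: nz12 nz34.
  move: (ent y 1 2) (ent y 1 3) (ent y 1 4) (ent y 2 4) (ent y 3 4).
  move=> y12 y13 y14 y24 y34 nz12 nz34.
  rewrite /Rrel centG4_normalize // X_N2_image.
  exists (uu4 1 (y13 / y12) 0 0 (y24 / y12) (y34 / y12)); split.
    split=> //; apply/imsetP; exists (y13 / y12, y24 / y12, y34 / y12) => //.
    by rewrite !inE mulf_neq0 ?invr_neq0.
  move=> x [/imsetP[[[u v] w] _ ->]] /=.
  by case/centG4_normal_inj=> -> -> ->.
rewrite X_N2_image card_imset.
  by rewrite cardsX cardsT card_prod cardsC1 mulnn subn1.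
by move=> [[u v] w] [[u' v'] w'] /uu4_inj[_ /= -> _ [_ -> ->]].
Qed.
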